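(* Let $\widetilde\nabla$ be the canonical snm-connection on $\mathbb R^3$ determined by $\mathsf C=\partial_z$, and let $M$ be the rotational surface $\psi(s,t)=(x(s)\cos t,x(s)\sin t,z(s))$, $s\in I$, $t\in\mathbb R$, with $I$ an open interval, $x>0$, $x'^2+z'^2=1$, whose generating curve $s\mapsto(x(s),z(s))$ is a segment of a straight line. If the sectional curvature $K$ of $M$ with respect to $\widetilde\nabla$ is constant, then either $x$ is constant (so $M$ is part of a circular cylinder about the $z$-axis) and $K=\tfrac12$, or $z$ is constant (so $M$ is part of a horizontal plane) and $K=0$.
   Context: Let $\langle\cdot,\cdot\rangle$ be the Euclidean metric on $\mathbb R^3$ and $\widetilde\nabla^0$ its Levi-Civita connection (the ordinary directional derivative). Given a smooth vector field $\mathsf C$ on $\mathbb R^3$, the semi-symmetric non-metric connection (snm-connection) determined by $\mathsf C$ is $\widetilde\nabla_XY=\widetilde\nabla^0_XY+\langle \mathsf C,Y\rangle X$. Its curvature tensor is $\widetilde R(X,Y)Z=\widetilde\nabla_X\widetilde\nabla_YZ-\widetilde\nabla_Y\widetilde\nabla_XZ-\widetilde\nabla_{[X,Y]}Z$. For a surface $M$ immersed in $\mathbb R^3$, the induced connection is $\nabla_XY=(\widetilde\nabla_XY)^{\top}$ (tangential component), with curvature tensor $R$ defined by the same formula, and the sectional curvature of $M$ with respect to $\widetilde\nabla$ at $p$ is $K(p)=\frac12\big(\langle R(e_1,e_2)e_2,e_1\rangle+\langle R(e_2,e_1)e_1,e_2\rangle\big)$ for an orthonormal basis $\{e_1,e_2\}$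 of $T_pM$. *)

From Stdlib Require Import Reals Lra.
From Coquelicot Require Import Coquelicot.
Open Scope R_scope.

Definition R3 := (R * R * R)%type.
Definition vx (u : R3) : R := fst (fst u).
Definition vy (u : R3) : R := snd (fst u).
Definition vz (u : R3) : R := snd u.
Definition vadd (u v : R3) : R3 := (vx u + vx v, vy u + vy v, vz u + vz v).
Definition vscal (a : R) (u : R3) : R3 := (a * vx u, a * vy u, a * vz u).
Definition dot (u v : R3) : R := vx u * vx v + vy u * vy v + vz u * vz v.

Definition pd_s (f : R * R -> R) (p : R * R) : R :=
  Derive (fun u => f (u, snd p)) (fst p).
Definition pd_t (f : R * R -> R) (p : R * R) : R :=
  Derive (fun u => f (fst p, u)) (snd p).
Definition pdV_s (F : R * R -> R3) (p : R * R) : R3 :=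
  (pd_s (fun q => vx (F q)) p, pd_s (fun q => vy (F q)) p, pd_s (fun q => vz (F q)) p).
Definition pdV_t (F : R * R -> R3) (p : R * R) : R3 :=
  (pd_t (fun q => vx (F q)) p, pd_t (fun q => vy (F q)) p, pd_t (fun q => vz (F q)) p).

Section Surface.
Variable psi : R * R -> R3.

Definition psi_s (p : R * R) : R3 := pdV_s psi p.
Definition psi_t (p : R * R) : R3 := pdV_t psi p.

(* A tangent vector field on M is given by its coefficients (a,b) w.r.t.
   the coordinate frame (psi_s, psi_t); its value in R^3 is a psi_s + b psi_t. *)
Definition TField := (R * R -> R * R)%type.
Definition vec (X : TField) (p : R * R) : R3 :=
  vadd (vscal (fst (X p)) (psi_s p)) (vscal (snd (X p)) (psi_t p)).

Definition dirf (X : TField) (f : R * R -> R) (p : R * R) : R :=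
  fst (X p) * pd_s f p + snd (X p) * pd_t f p.
(* ambient directional derivative (Levi-Civita of R^3) of an R^3-valued
   field along M in the direction X *)
Definition dirV (X : TField) (F : R * R -> R3) (p : R * R) : R3 :=
  (dirf X (fun q => vx (F q)) p, dirf X (fun q => vy (F q)) p,
   dirf X (fun q => vz (F q)) p).

(* coefficients (w.r.t. psi_s, psi_t) of the tangential (orthogonal
   projection) component W^T of W in T_pM *)
Definition tcoord (W : R3) (p : R * R) : R * R :=
  let g11 := dot (psi_s p) (psi_s p) in
  let g12 := dot (psi_s p) (psi_t p) in
  let g22 := dot (psi_t p) (psi_t p) in
  let w1 := dot W (psi_s p) in
  let w2 := dot W (psi_t p) in
  let det := g11 * g22 - g12 * g12 in
  ((g22 * w1 - g12 * w2) / det, (g11 * w2 - g12 * w1) / det).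

Definition fsub (X Y : TField) : TField :=
  fun p => (fst (X p) - fst (Y p), snd (X p) - snd (Y p)).

Definition bracket (X Y : TField) : TField :=
  fun p => (dirf X (fun q => fst (Y q)) p - dirf Y (fun q => fst (X q)) p,
            dirf X (fun q => snd (Y q)) p - dirf Y (fun q => snd (X q)) p).

(* C : smooth vector field on R^3 determining the snm-connection
   tnabla_X Y = tnabla0_X Y + <C,Y> X ; induced connection
   nabla_X Y = (tnabla_X Y)^T *)
Variable C : R3 -> R3.

Definition nabla (X Y : TField) : TField :=
  fun p => tcoord (vadd (dirV X (vec Y) p)
                        (vscal (dot (C (psi p)) (vec Y p)) (vec X p))) p.

Definition curv (X Y Z : TField) : TField :=
  fsub (fsub (nabla X (nabla Y Z)) (nabla Y (nabla X Z))) (nabla (bracket X Y) Z).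

(* orthonormal frame {e1,e2} of T_pM obtained by Gram-Schmidt from
   (psi_s, psi_t), as coefficient fields *)
Definition frameE1 : TField :=
  fun p => (/ sqrt (dot (psi_s p) (psi_s p)), 0).
Definition frameE2 : TField :=
  fun p =>
    let c := dot (psi_t p) (psi_s p) / dot (psi_s p) (psi_s p) in
    let w := vadd (psi_t p) (vscal (- c) (psi_s p)) in
    let n := sqrt (dot w w) in
    (- c / n, / n).

Definition sect_curv (p : R * R) : R :=
  / 2 * (dot (vec (curv frameE1 frameE2 frameE2) p) (vec frameE1 p)
       + dot (vec (curv frameE2 frameE1 frameE1) p) (vec frameE2 p)).

End Surface.

Definition Cz : R3 -> R3 := fun _ => (0, 0, 1).

Definition rot_surface (x z : R -> R) : R * R -> R3 :=
  fun p => (x (fst p) * cos (snd p), x (fst p) * sin (snd p), z (fst p)).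

Definition in_interval (a b : Rbar) (s : R) : Prop := Rbar_lt a s /\ Rbar_lt s b.

(* Differentiating the line equation and the unit-speed condition shows that
   (x'', z'') is orthogonal both to the unit vector (x', z') and to the normal
   (A, B) of the line, which are orthogonal to each other; hence x' = al and
   z' = be are constant with al^2 + be^2 = 1.  For such a profile {psi_s, psi_t / x}
   is an orthonormal frame whose coefficients depend on s only, and a direct
   computation of the induced connection on it gives K = (be^2 - al be / x) / 2.
   Since x = x0 + al s is non-constant when al <> 0, a constant K forces
   al be = 0: either al = 0, x is constant and K = be^2 / 2 = 1/2, or be = 0,
   z is constant and K = 0. *)

From Pilot Require Import Defs.
From Stdlib Require Import Reals Lra Nsatz.
From Coquelicot Require Import Coquelicot.
Open Scope R_scope.

Lemma in_interval_locally a b s : in_interval a b s -> locally s (in_interval a b).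
Proof.
  intros [Has Hsb].
  exact (filter_and _ _ (open_Rbar_gt' s a Has) (open_Rbar_lt' s b Hsb)).
Qed.

Lemma in_interval_between a b s1 s2 s : in_interval a b s1 -> in_interval a b s2 ->
  Rmin s1 s2 <= s <= Rmax s1 s2 -> in_interval a b s.
Proof.
  intros [H1a H1b] [H2a H2b] [Hmin Hmax]; split.
  - destruct a as [a| |]; simpl in *; try tauto.
    unfold Rmin in Hmin; destruct (Rle_dec s1 s2); lra.
  - destruct b as [b| |]; simpl in *; try tauto.
    unfold Rmax in Hmax; destruct (Rle_dec s1 s2); lra.
Qed.

Lemma in_interval_two_points a b : Rbar_lt a b ->
  exists s1 s2, in_interval a b s1 /\ in_interval a b s2 /\ s1 <> s2.
Proof.
  intros Hab.
  assert (Hne : exists s0, in_interval a b s0).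
  { destruct a as [a| |], b as [b| |]; simpl in Hab; try tauto.
    - exists ((a + b) / 2); split; simpl; lra.
    - exists (a + 1); split; simpl; auto; lra.
    - exists (b - 1); split; simpl; auto; lra.
    - exists 0; split; simpl; auto. }
  destruct Hne as [s0 Hs0].
  destruct (in_interval_locally a b s0 Hs0) as [[e He] Hball]; simpl in Hball.
  exists s0, (s0 + e / 2); split; [exact Hs0|split; [|lra]].
  apply Hball. unfold ball; simpl; unfold AbsRing_ball, abs, minus, plus, opp; simpl.
  replace (s0 + e / 2 + - s0) with (e / 2) by ring.
  rewrite Rabs_right; lra.
Qed.

Lemma is_derive_const_on_affine a b f c :
  (forall s, in_interval a b s -> is_derive f s c) ->
  forall s1 s2, in_interval a b s1 -> in_interval a b s2 -> f s2 = f s1 + c * (s2 - s1).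
Proof.
  intros Hd s1 s2 H1 H2.
  destruct (MVT_gen f s1 s2 (fun _ => c)) as [m [_ Hm]]; [| |lra].
  - intros u Hu. apply Hd. apply (in_interval_between a b s1 s2); auto; lra.
  - intros u Hu. apply continuity_pt_filterlim, (ex_derive_continuous f u).
    exists c. apply Hd, (in_interval_between a b s1 s2); auto.
Qed.

Lemma Derive_const_on a b f c s : in_interval a b s ->
  (forall u, in_interval a b u -> f u = c) -> Derive f s = 0.
Proof.
  intros Hs Hf. rewrite (Derive_ext_loc f (fun _ => c)); [apply Derive_const|].
  exact (filter_imp _ _ Hf (in_interval_locally a b s Hs)).
Qed.

(* [auto_derive] leaves [Derive (fun y => f y)] where [Derive f] is expected. *)
Ltac eta_Derive := repeat match goal with
  |- context [Derive (fun y => ?f y) ?s] => change (Derive (fun y => f y) s) with (Derive f s) end.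

Lemma perp_unit_perp_eq0 A B p q u v : (A <> 0 \/ B <> 0) ->
  A * p + B * q = 0 -> p ^ 2 + q ^ 2 = 1 -> p * u + q * v = 0 -> A * u + B * v = 0 ->
  u = 0 /\ v = 0.
Proof.
  intros HAB Hpq Hunit Hpu HAu.
  assert (Hdet : u * q - v * p = 0).
  { assert (EA : A * (u * q - v * p) = q * (A * u + B * v) - v * (A * p + B * q)) by ring.
    assert (EB : B * (u * q - v * p) = u * (A * p + B * q) - p * (A * u + B * v)) by ring.
    rewrite Hpq, HAu in EA, EB.
    destruct HAB as [HA|HB].
    - destruct (Rmult_integral A (u * q - v * p)); [lra|contradiction|assumption].
    - destruct (Rmult_integral B (u * q - v * p)); [lra|contradiction|assumption]. }
  split.
  - replace u with (p * (p * u + q * v) + q * (u * q - v * p) - u * (p ^ 2 + q ^ 2 - 1)) by ring.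
    rewrite Hpu, Hdet, Hunit; ring.
  - replace v with (q * (p * u + q * v) - p * (u * q - v * p) - v * (p ^ 2 + q ^ 2 - 1)) by ring.
    rewrite Hpu, Hdet, Hunit; ring.
Qed.

Lemma Derive2_eq0_is_derive a b f s0 :
  (forall s, in_interval a b s -> ex_derive f s) ->
  (forall s, in_interval a b s -> ex_derive (Derive f) s) ->
  (forall s, in_interval a b s -> Derive (Derive f) s = 0) ->
  in_interval a b s0 -> forall s, in_interval a b s -> is_derive f s (Derive f s0).
Proof.
  intros Hf1 Hf2 Hf0 Hs0 s Hs.
  rewrite (is_derive_const_on_affine a b (Derive f) 0) with (s1 := s) (s2 := s0); auto.
  - rewrite Rmult_0_l, Rplus_0_r. apply Derive_correct; auto.
  - intros u Hu. rewrite <- (Hf0 u Hu). apply Derive_correct; auto.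
Qed.

Lemma unit_speed_line_slopes a b (x z : R -> R) :
  Rbar_lt a b ->
  (forall n s, in_interval a b s -> ex_derive_n x n s) ->
  (forall n s, in_interval a b s -> ex_derive_n z n s) ->
  (forall s, in_interval a b s -> (Derive x s) ^ 2 + (Derive z s) ^ 2 = 1) ->
  (exists A B c : R, (A <> 0 \/ B <> 0) /\
     forall s, in_interval a b s -> A * x s + B * z s = c) ->
  exists al be, al ^ 2 + be ^ 2 = 1 /\
    forall s, in_interval a b s -> is_derive x s al /\ is_derive z s be.
Proof.
  intros Hab Hx Hz Hunit [A [B [c [HAB Hline]]]].
  assert (Hx1 : forall s, in_interval a b s -> ex_derive x s) by exact (Hx 1%nat).
  assert (Hz1 : forall s, in_interval a b s -> ex_derive z s) by exact (Hz 1%nat).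
  assert (Hx2 : forall s, in_interval a b s -> ex_derive (Derive x) s) by exact (Hx 2%nat).
  assert (Hz2 : forall s, in_interval a b s -> ex_derive (Derive z) s) by exact (Hz 2%nat).
  assert (Hperp : forall s, in_interval a b s -> A * Derive x s + B * Derive z s = 0).
  { intros s Hs. rewrite <- (Derive_const_on a b _ c s Hs Hline).
    symmetry. apply is_derive_unique. auto_derive; [auto|]. eta_Derive; ring. }
  assert (Hacc : forall s, in_interval a b s ->
    Derive x s * Derive (Derive x) s + Derive z s * Derive (Derive z) s = 0).
  { intros s Hs. assert (H := Derive_const_on a b _ 1 s Hs Hunit).
    rewrite (is_derive_unique _ s
      (2 * (Derive x s * Derive (Derive x) s + Derive z s * Derive (Derive z) s))) in H; [lra|].
    auto_derive; [auto|]. eta_Derive; ring. }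
  assert (Hacc_perp : forall s, in_interval a b s ->
    A * Derive (Derive x) s + B * Derive (Derive z) s = 0).
  { intros s Hs. rewrite <- (Derive_const_on a b _ 0 s Hs Hperp).
    symmetry. apply is_derive_unique. auto_derive; [auto|]. eta_Derive; ring. }
  destruct (in_interval_two_points a b Hab) as [s0 [_ [Hs0 _]]].
  exists (Derive x s0), (Derive z s0). split; [auto|].
  intros s Hs.
  assert (H0 := fun u Hu => perp_unit_perp_eq0 A B _ _ _ _ HAB (Hperp u Hu) (Hunit u Hu)
                  (Hacc u Hu) (Hacc_perp u Hu)).
  split; apply (Derive2_eq0_is_derive a b); auto; intros u Hu; apply (H0 u Hu).
Qed.

Lemma cos_sin_sum_sq t : cos t * cos t + sin t * sin t = 1.
Proof. pose proof (sin2_cos2 t) as H; unfold Rsqr in H; lra. Qed.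

Lemma pd_s_ext_on a b f g p : in_interval a b (fst p) ->
  (forall q, in_interval a b (fst q) -> f q = g q) -> pd_s f p = pd_s g p.
Proof.
  intros Hp Hfg. apply Derive_ext_loc.
  apply (filter_imp (in_interval a b)); [|exact (in_interval_locally a b _ Hp)].
  intros u Hu. apply Hfg; exact Hu.
Qed.

Lemma pd_t_ext_on a b f g p : in_interval a b (fst p) ->
  (forall q, in_interval a b (fst q) -> f q = g q) -> pd_t f p = pd_t g p.
Proof. intros Hp Hfg. apply Derive_ext. intros u. apply Hfg; exact Hp. Qed.

Lemma pdV_s_ext_on a b F G p : in_interval a b (fst p) ->
  (forall q, in_interval a b (fst q) -> F q = G q) -> pdV_s F p = pdV_s G p.
Proof.
  intros Hp HFG. unfold pdV_s.
  f_equal; [f_equal|]; apply (pd_s_ext_on a b _ _ p Hp); intros q Hq; rewrite HFG; auto.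
Qed.

Lemma pdV_t_ext_on a b F G p : in_interval a b (fst p) ->
  (forall q, in_interval a b (fst q) -> F q = G q) -> pdV_t F p = pdV_t G p.
Proof.
  intros Hp HFG. unfold pdV_t.
  f_equal; [f_equal|]; apply (pd_t_ext_on a b _ _ p Hp); intros q Hq; rewrite HFG; auto.
Qed.

Lemma dot_comm u v : dot u v = dot v u.
Proof. unfold dot; ring. Qed.

Lemma dirV_pdV X F p :
  dirV X F p = vadd (vscal (fst (X p)) (pdV_s F p)) (vscal (snd (X p)) (pdV_t F p)).
Proof. reflexivity. Qed.

Lemma bracket_s_fields a b (X Y : TField) a1 b1 a2 b2 da1 db1 da2 db2 s t :
  in_interval a b s ->
  (forall q, in_interval a b (fst q) -> X q = (a1 (fst q), b1 (fst q))) ->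
  (forall q, in_interval a b (fst q) -> Y q = (a2 (fst q), b2 (fst q))) ->
  is_derive a1 s da1 -> is_derive b1 s db1 -> is_derive a2 s da2 -> is_derive b2 s db2 ->
  Defs.bracket X Y (s, t) = (a1 s * da2 - a2 s * da1, a1 s * db2 - a2 s * db1).
Proof.
  intros Hs HX HY Ha1 Hb1 Ha2 Hb2. unfold Defs.bracket, dirf.
  rewrite (pd_s_ext_on a b (fun q => fst (Y q)) (fun q => a2 (fst q))),
    (pd_s_ext_on a b (fun q => snd (Y q)) (fun q => b2 (fst q))),
    (pd_s_ext_on a b (fun q => fst (X q)) (fun q => a1 (fst q))),
    (pd_s_ext_on a b (fun q => snd (X q)) (fun q => b1 (fst q))),
    (pd_t_ext_on a b (fun q => fst (Y q)) (fun q => a2 (fst q))),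
    (pd_t_ext_on a b (fun q => snd (Y q)) (fun q => b2 (fst q))),
    (pd_t_ext_on a b (fun q => fst (X q)) (fun q => a1 (fst q))),
    (pd_t_ext_on a b (fun q => snd (X q)) (fun q => b1 (fst q)));
    try exact Hs; try (intros q Hq; rewrite ?HX, ?HY; auto).
  unfold pd_s, pd_t; simpl. rewrite !Derive_const. eta_Derive.
  rewrite (is_derive_unique _ _ _ Ha1), (is_derive_unique _ _ _ Hb1),
    (is_derive_unique _ _ _ Ha2), (is_derive_unique _ _ _ Hb2), (HX (s, t) Hs), (HY (s, t) Hs).
  simpl. f_equal; ring.
Qed.

Lemma tcoord_orthogonal psi W p r :
  dot (psi_s psi p) (psi_s psi p) = 1 -> dot (psi_s psi p) (psi_t psi p) = 0 ->
  dot (psi_t psi p) (psi_t psi p) = r ^ 2 -> r <> 0 ->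
  tcoord psi W p = (dot W (psi_s psi p), dot W (psi_t psi p) / r ^ 2).
Proof.
  intros Hss Hst Htt Hr. unfold tcoord. rewrite Hss, Hst, Htt.
  f_equal; field; auto.
Qed.

Lemma psi_s_rot_surface x z s t dx dz : is_derive x s dx -> is_derive z s dz ->
  psi_s (rot_surface x z) (s, t) = (dx * cos t, dx * sin t, dz).
Proof.
  intros Hx Hz. unfold psi_s, pdV_s, pd_s, rot_surface, vx, vy, vz; simpl.
  f_equal; [f_equal|]; apply is_derive_unique; [| |exact Hz];
    auto_derive; try (exists dx; exact Hx); eta_Derive; rewrite (is_derive_unique _ _ _ Hx); ring.
Qed.

Lemma psi_t_rot_surface x z s t :
  psi_t (rot_surface x z) (s, t) = (- (x s * sin t), x s * cos t, 0).
Proof.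
  unfold psi_t, pdV_t, pd_t, rot_surface, vx, vy, vz; simpl.
  f_equal; [f_equal|]; apply is_derive_unique; auto_derive; auto; ring.
Qed.

Section RotatedLine.

Variables (a b : Rbar) (x z : R -> R) (al be : R).
Hypothesis unit_slope : al ^ 2 + be ^ 2 = 1.
Hypothesis x_slope : forall s, in_interval a b s -> is_derive x s al.
Hypothesis z_slope : forall s, in_interval a b s -> is_derive z s be.
Hypothesis x_pos : forall s, in_interval a b s -> 0 < x s.

Local Notation psi := (rot_surface x z).
Local Notation E1 := (frameE1 psi).
Local Notation E2 := (frameE2 psi).
Local Notation nab := (nabla psi Cz).

Lemma psi_s_line s t : in_interval a b s -> psi_s psi (s, t) = (al * cos t, al * sin t, be).
Proof. intros Hs. exact (psi_s_rot_surface x z s t al be (x_slope s Hs) (z_slope s Hs)). Qed.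

Lemma dot_psi_s_line s t : in_interval a b s -> dot (psi_s psi (s, t)) (psi_s psi (s, t)) = 1.
Proof.
  intros Hs. rewrite psi_s_line by exact Hs. unfold dot, vx, vy, vz; simpl.
  pose proof (cos_sin_sum_sq t). nra.
Qed.

Lemma dot_psi_s_t_line s t : in_interval a b s -> dot (psi_s psi (s, t)) (psi_t psi (s, t)) = 0.
Proof.
  intros Hs. rewrite psi_s_line, psi_t_rot_surface by exact Hs.
  unfold dot, vx, vy, vz; simpl. ring.
Qed.

Lemma dot_psi_t_line s t : dot (psi_t psi (s, t)) (psi_t psi (s, t)) = x s ^ 2.
Proof.
  rewrite psi_t_rot_surface. unfold dot, vx, vy, vz; simpl.
  pose proof (cos_sin_sum_sq t). nra.
Qed.

Lemma frameE1_line q : in_interval a b (fst q) -> E1 q = (1, 0).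
Proof.
  destruct q as [s t]; simpl; intros Hs.
  unfold frameE1. rewrite dot_psi_s_line, sqrt_1, Rinv_1 by exact Hs. reflexivity.
Qed.

Lemma frameE2_line q : in_interval a b (fst q) -> E2 q = (0, / x (fst q)).
Proof.
  destruct q as [s t]; simpl; intros Hs. assert (Hx := x_pos s Hs).
  unfold frameE2; cbv zeta.
  rewrite dot_comm, dot_psi_s_t_line, dot_psi_s_line by exact Hs.
  replace (vadd (psi_t psi (s, t)) (vscal (- (0 / 1)) (psi_s psi (s, t)))) with (psi_t psi (s, t))
    by (rewrite psi_t_rot_surface; unfold vadd, vscal, vx, vy, vz; simpl; f_equal; [f_equal|]; field).
  rewrite dot_psi_t_line, sqrt_pow2 by lra. f_equal. field. lra.
Qed.

Lemma vec_line (Y : TField) c1 c2 s t : in_interval a b s -> Y (s, t) = (c1, c2) ->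
  vec psi Y (s, t) = (c1 * al * cos t - c2 * x s * sin t, c1 * al * sin t + c2 * x s * cos t, c1 * be).
Proof.
  intros Hs HY. unfold vec. rewrite HY, psi_s_line, psi_t_rot_surface by exact Hs.
  unfold vadd, vscal, vx, vy, vz; simpl. f_equal; [f_equal|]; ring.
Qed.

Section SFields.

Variables (Y : TField) (a2 b2 : R -> R).
Hypothesis Y_coef : forall q, in_interval a b (fst q) -> Y q = (a2 (fst q), b2 (fst q)).

Let vecY q := (a2 (fst q) * al * cos (snd q) - b2 (fst q) * x (fst q) * sin (snd q),
  a2 (fst q) * al * sin (snd q) + b2 (fst q) * x (fst q) * cos (snd q), a2 (fst q) * be).

Lemma vec_s_field q : in_interval a b (fst q) -> vec psi Y q = vecY q.
Proof. destruct q as [s t]; intros Hs. apply vec_line, Y_coef; exact Hs. Qed.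

Lemma pdV_s_vec_s_field (da2 db2 s t : R) : in_interval a b s ->
  is_derive a2 s da2 -> is_derive b2 s db2 ->
  pdV_s (vec psi Y) (s, t) = (da2 * al * cos t - (db2 * x s + b2 s * al) * sin t,
    da2 * al * sin t + (db2 * x s + b2 s * al) * cos t, da2 * be).
Proof.
  intros Hs Ha Hb. rewrite (pdV_s_ext_on a b _ vecY (s, t) Hs vec_s_field).
  assert (Hx := x_slope s Hs).
  unfold pdV_s, pd_s, vecY, vx, vy, vz; simpl.
  f_equal; [f_equal|]; apply is_derive_unique;
    auto_derive; try (repeat split; eexists; eassumption); eta_Derive;
    rewrite ?(is_derive_unique _ _ _ Ha), ?(is_derive_unique _ _ _ Hb), ?(is_derive_unique _ _ _ Hx); ring.
Qed.

Lemma pdV_t_vec_s_field s t : in_interval a b s ->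
  pdV_t (vec psi Y) (s, t) = (- (a2 s * al * sin t) - b2 s * x s * cos t,
    a2 s * al * cos t - b2 s * x s * sin t, 0).
Proof.
  intros Hs. rewrite (pdV_t_ext_on a b _ vecY (s, t) Hs vec_s_field).
  unfold pdV_t, pd_t, vecY, vx, vy, vz; simpl.
  f_equal; [f_equal|]; apply is_derive_unique; auto_derive; auto; ring.
Qed.

Lemma nabla_s_field (X : TField) (a1 b1 da2 db2 s t : R) : in_interval a b s ->
  X (s, t) = (a1, b1) -> is_derive a2 s da2 -> is_derive b2 s db2 ->
  nab X Y (s, t) = (a1 * da2 - x s * al * b1 * b2 s + be * a2 s * a1,
    a1 * db2 + al / x s * (a2 s * b1 + b2 s * a1) + be * a2 s * b1).
Proof.
  intros Hs HX Ha Hb. assert (Hx := x_pos s Hs).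
  unfold nabla. rewrite dirV_pdV, HX, (pdV_s_vec_s_field da2 db2 s t Hs Ha Hb),
    (pdV_t_vec_s_field s t Hs), (vec_s_field (s, t) Hs), (vec_line X a1 b1 s t Hs HX).
  rewrite (tcoord_orthogonal psi _ _ (x s)); [| apply dot_psi_s_line | apply dot_psi_s_t_line
    | apply dot_psi_t_line | lra]; try exact Hs.
  rewrite psi_s_line, psi_t_rot_surface by exact Hs.
  pose proof (cos_sin_sum_sq t) as Htrig.
  assert (Hinv : x s * / x s = 1) by (field; lra).
  unfold Rdiv. replace (/ x s ^ 2) with (/ x s * / x s) by (field; lra).
  unfold vecY, Cz, dot, vadd, vscal, vx, vy, vz; simpl. set (ix := / x s) in *.
  clear - unit_slope Htrig Hinv. cbn [pow] in *. f_equal; nsatz.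
Qed.

End SFields.

Lemma is_derive_inv_x s : in_interval a b s -> is_derive (fun u => / x u) s (- al / x s ^ 2).
Proof. intros Hs. apply is_derive_inv; [apply x_slope | apply Rgt_not_eq, x_pos]; exact Hs. Qed.

Lemma nabla_E1_E1 q : in_interval a b (fst q) -> nab E1 E1 q = (be, 0).
Proof.
  destruct q as [s t]; simpl; intros Hs.
  rewrite (nabla_s_field E1 (fun _ => 1) (fun _ => 0) frameE1_line E1 1 0 0 0 s t Hs);
    [|apply frameE1_line, Hs | auto_derive; auto | auto_derive; auto].
  assert (Hx := x_pos s Hs). f_equal; field; lra.
Qed.

Lemma nabla_E1_E2 q : in_interval a b (fst q) -> nab E1 E2 q = (0, 0).
Proof.
  destruct q as [s t]; simpl; intros Hs.
  rewrite (nabla_s_field E2 (fun _ => 0) (fun u => / x u) frameE2_line E1 1 0 0 (- al / x s ^ 2) s t Hs);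
    [|apply frameE1_line, Hs | auto_derive; auto | apply is_derive_inv_x, Hs].
  assert (Hx := x_pos s Hs). f_equal; field; lra.
Qed.

Lemma nabla_E2_E2 q : in_interval a b (fst q) -> nab E2 E2 q = (- al / x (fst q), 0).
Proof.
  destruct q as [s t]; simpl; intros Hs.
  rewrite (nabla_s_field E2 (fun _ => 0) (fun u => / x u) frameE2_line E2 0 (/ x s) 0 (- al / x s ^ 2) s t Hs);
    [|apply frameE2_line, Hs | auto_derive; auto | apply is_derive_inv_x, Hs].
  assert (Hx := x_pos s Hs). f_equal; field; lra.
Qed.

Lemma nabla_E2_E1 q : in_interval a b (fst q) -> nab E2 E1 q = (0, al / x (fst q) ^ 2 + be / x (fst q)).
Proof.
  destruct q as [s t]; simpl; intros Hs.
  rewrite (nabla_s_field E1 (fun _ => 1) (fun _ => 0) frameE1_line E2 0 (/ x s) 0 0 s t Hs);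
    [|apply frameE2_line, Hs | auto_derive; auto | auto_derive; auto].
  assert (Hx := x_pos s Hs). f_equal; field; lra.
Qed.

Lemma bracket_E1_E2 s t : in_interval a b s -> Defs.bracket E1 E2 (s, t) = (0, - al / x s ^ 2).
Proof.
  intros Hs.
  rewrite (bracket_s_fields a b E1 E2 (fun _ => 1) (fun _ => 0) (fun _ => 0) (fun u => / x u)
    0 0 0 (- al / x s ^ 2) s t Hs frameE1_line frameE2_line);
    [| auto_derive; auto | auto_derive; auto | auto_derive; auto | apply is_derive_inv_x, Hs].
  f_equal; ring.
Qed.

Lemma bracket_E2_E1 s t : in_interval a b s -> Defs.bracket E2 E1 (s, t) = (0, al / x s ^ 2).
Proof.
  intros Hs.
  rewrite (bracket_s_fields a b E2 E1 (fun _ => 0) (fun u => / x u) (fun _ => 1) (fun _ => 0)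
    0 (- al / x s ^ 2) 0 0 s t Hs frameE2_line frameE1_line);
    [| auto_derive; auto | apply is_derive_inv_x, Hs | auto_derive; auto | auto_derive; auto].
  f_equal; field. apply Rgt_not_eq, x_pos, Hs.
Qed.

Lemma curv_E1_E2_E2 s t : in_interval a b s -> curv psi Cz E1 E2 E2 (s, t) = (- al * be / x s, 0).
Proof.
  intros Hs. assert (Hx := x_pos s Hs). unfold curv, fsub.
  rewrite (nabla_s_field (nab E2 E2) (fun u => - al / x u) (fun _ => 0) nabla_E2_E2
             E1 1 0 (- al * (- al / x s ^ 2)) 0 s t Hs);
    [| apply frameE1_line, Hs | apply (is_derive_scal (fun u => / x u)), is_derive_inv_x, Hs
     | auto_derive; auto].
  rewrite (nabla_s_field (nab E1 E2) (fun _ => 0) (fun _ => 0) nabla_E1_E2 E2 0 (/ x s) 0 0 s t Hs);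
    [| apply frameE2_line, Hs | auto_derive; auto | auto_derive; auto].
  rewrite (nabla_s_field E2 (fun _ => 0) (fun u => / x u) frameE2_line
             (Defs.bracket E1 E2) 0 (- al / x s ^ 2) 0 (- al / x s ^ 2) s t Hs);
    [| apply bracket_E1_E2, Hs | auto_derive; auto | apply is_derive_inv_x, Hs].
  simpl. f_equal; field; lra.
Qed.

Lemma curv_E2_E1_E1 s t : in_interval a b s -> curv psi Cz E2 E1 E1 (s, t) = (0, be ^ 2 / x s).
Proof.
  intros Hs. assert (Hx := x_pos s Hs). unfold curv, fsub.
  rewrite (nabla_s_field (nab E1 E1) (fun _ => be) (fun _ => 0) nabla_E1_E1 E2 0 (/ x s) 0 0 s t Hs);
    [| apply frameE2_line, Hs | auto_derive; auto | auto_derive; auto].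
  rewrite (nabla_s_field (nab E2 E1) (fun _ => 0) (fun u => al / x u ^ 2 + be / x u) nabla_E2_E1
             E1 1 0 0 (- 2 * al ^ 2 / x s ^ 3 - al * be / x s ^ 2) s t Hs);
    [| apply frameE1_line, Hs | auto_derive; auto |].
  2: { auto_derive.
       - repeat split; try (exists al; apply x_slope, Hs); nra.
       - eta_Derive. rewrite (is_derive_unique _ _ _ (x_slope s Hs)). field; lra. }
  rewrite (nabla_s_field E1 (fun _ => 1) (fun _ => 0) frameE1_line
             (Defs.bracket E2 E1) 0 (al / x s ^ 2) 0 0 s t Hs);
    [| apply bracket_E2_E1, Hs | auto_derive; auto | auto_derive; auto].
  simpl. f_equal; field; lra.
Qed.

Lemma sect_curv_line s t : in_interval a b s ->
  sect_curv psi Cz (s, t) = (be ^ 2 - al * be / x s) / 2.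
Proof.
  intros Hs. assert (Hx := x_pos s Hs). unfold sect_curv, vec.
  rewrite curv_E1_E2_E2, curv_E2_E1_E1, frameE1_line, frameE2_line by exact Hs.
  rewrite psi_s_line, psi_t_rot_surface by exact Hs.
  pose proof (cos_sin_sum_sq t) as Htrig.
  assert (Hinv : x s * / x s = 1) by (field; lra).
  unfold dot, vadd, vscal, vx, vy, vz, Rdiv; simpl. set (ix := / x s) in *.
  clear - unit_slope Htrig Hinv. cbn [pow] in *. nsatz.
Qed.

Lemma sect_curv_const_slopes s1 s2 t : in_interval a b s1 -> in_interval a b s2 -> s1 <> s2 ->
  sect_curv psi Cz (s1, t) = sect_curv psi Cz (s2, t) -> al * be = 0.
Proof.
  intros Hs1 Hs2 Hne HK. rewrite !sect_curv_line in HK by assumption.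
  assert (Hx1 := x_pos s1 Hs1). assert (Hx2 := x_pos s2 Hs2).
  assert (Hgap : al * be * (x s2 - x s1) = 0).
  { replace (al * be * (x s2 - x s1)) with ((al * be / x s1 - al * be / x s2) * (x s1 * x s2))
      by (field; lra).
    replace (al * be / x s1 - al * be / x s2) with 0 by lra. ring. }
  rewrite (is_derive_const_on_affine a b x al x_slope s1 s2 Hs1 Hs2) in Hgap.
  assert (Hprod : al * (al * be) * (s2 - s1) = 0) by (rewrite <- Hgap; ring).
  destruct (Rmult_integral _ _ Hprod) as [Hprod'|Hs]; [|lra].
  destruct (Rmult_integral _ _ Hprod') as [Hal|Halbe]; [rewrite Hal; ring | exact Halbe].
Qed.

End RotatedLine.

Theorem theorem4p3 (a b : Rbar) (x z : R -> R) :
  Rbar_lt a b ->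
  (forall n s, in_interval a b s -> ex_derive_n x n s) ->
  (forall n s, in_interval a b s -> ex_derive_n z n s) ->
  (forall s, in_interval a b s -> 0 < x s) ->
  (forall s, in_interval a b s -> (Derive x s) ^ 2 + (Derive z s) ^ 2 = 1) ->
  (exists A B c : R, (A <> 0 \/ B <> 0) /\
     forall s, in_interval a b s -> A * x s + B * z s = c) ->
  (exists K0 : R, forall s t, in_interval a b s ->
     sect_curv (rot_surface x z) Cz (s, t) = K0) ->
  ((exists c : R, forall s, in_interval a b s -> x s = c) /\
     (forall s t, in_interval a b s -> sect_curv (rot_surface x z) Cz (s, t) = / 2))
  \/
  ((exists c : R, forall s, in_interval a b s -> z s = c) /\
     (forall s t, in_interval a b s -> sect_curv (rot_surface x z) Cz (s, t) = 0)).
Proof.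
  intros Hab Hx Hz Hpos Hunit Hline [K0 HK].
  destruct (unit_speed_line_slopes a b x z Hab Hx Hz Hunit Hline) as [al [be [Hslope Hder]]].
  assert (Hxd : forall s, in_interval a b s -> is_derive x s al) by (intros s Hs; apply Hder, Hs).
  assert (Hzd : forall s, in_interval a b s -> is_derive z s be) by (intros s Hs; apply Hder, Hs).
  assert (HKline := sect_curv_line a b x z al be Hslope Hxd Hzd Hpos).
  destruct (in_interval_two_points a b Hab) as [s1 [s2 [Hs1 [Hs2 Hne]]]].
  assert (Halbe : al * be = 0).
  { apply (sect_curv_const_slopes a b x z al be Hslope Hxd Hzd Hpos s1 s2 0 Hs1 Hs2 Hne).
    rewrite (HK s1 0 Hs1), (HK s2 0 Hs2). reflexivity. }
  destruct (Rmult_integral _ _ Halbe) as [Hal|Hbe].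
  - left. split.
    + exists (x s1). intros s Hs.
      rewrite (is_derive_const_on_affine a b x al Hxd s1 s Hs1 Hs), Hal. ring.
    + intros s t Hs. assert (Hbe2 : be ^ 2 = 1) by (rewrite Hal in Hslope; nra).
      rewrite HKline, Hal, Hbe2 by exact Hs. assert (Hx0 := Hpos s Hs). field; lra.
  - right. split.
    + exists (z s1). intros s Hs.
      rewrite (is_derive_const_on_affine a b z be Hzd s1 s Hs1 Hs), Hbe. ring.
    + intros s t Hs. rewrite HKline, Hbe by exact Hs.
      assert (Hx0 := Hpos s Hs). field; lra.
Qed.
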